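(* Let $C$ be an $(n,k)$ linear code over $H(\mathbb{Z})_{1+e_1+e_2}$. If $C$ corrects all errors of Lipschitz weight $2$ or less, then $(3^2)^{n-k}\ge 32n^2-24n+1$.
   Context: $H(\mathbb{Z})=\{a_0+a_1e_1+a_2e_2+a_3e_3:a_i\in\mathbb{Z}\}$ (Lipschitz integers) with quaternion multiplication $e_1^2=e_2^2=e_3^2=-1$, $e_1e_2=-e_2e_1=e_3$, $e_3e_1=-e_1e_3=e_2$, $e_2e_3=-e_3e_2=e_1$; $N(q)=a_0^2+a_1^2+a_2^2+a_3^2$. Right congruence: $q_1\equiv_r q_2 \pmod\pi$ iff $q_1-q_2=\delta\pi$ for some $\delta\in H(\mathbb{Z})$; $H(\mathbb{Z})_\pi=H(\mathbb{Z})/H(\mathbb{Z})\pi$, which has $N(\pi)^2$ elements (here $N(1+e_1+e_2)=3$). The Lipschitz weight of a class $\gamma$ is $\min\{|a_0|+|a_1|+|a_2|+|a_3| : a_0+a_1e_1+a_2e_2+a_3e_3\in\gamma\}$; the weight of a vector is the sum of the weights of its components. An $(n,k)$ linear code over $H(\mathbb{Z})_\pi$ is an additive subgroup $C\subseteq H(\mathbb{Z})_\pi^n$ such that $H(\mathbb{Z})_\pi^n/C$ has exactly $(N(\pi)^2)^{n-k}$ cosets. $C$ corrects all errors of weight $t$ or less if all vectors of Lipschitz weight at most $t$ lie in pairwise distinct cosets of $C$. *)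

From HB Require Import structures.
From mathcomp Require Import all_boot all_order all_algebra.
Set Implicit Arguments. Unset Strict Implicit. Unset Printing Implicit Defensive.
Import Order.TTheory GRing.Theory Num.Theory.

(* Lipschitz integers a0 + a1 e1 + a2 e2 + a3 e3 with a_i in Z *)
Record quat := Quat { q0 : int; q1 : int; q2 : int; q3 : int }.

Local Open Scope ring_scope.

Definition qadd (a b : quat) : quat :=
  Quat (q0 a + q0 b) (q1 a + q1 b) (q2 a + q2 b) (q3 a + q3 b).
Definition qopp (a : quat) : quat := Quat (- q0 a) (- q1 a) (- q2 a) (- q3 a).
Definition qsub (a b : quat) : quat := qadd a (qopp b).
Definition qzero : quat := Quat 0 0 0 0.

(* Hamilton product: e1^2=e2^2=e3^2=-1, e1e2=e3, e2e3=e1, e3e1=e2 *)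
Definition qmul (a b : quat) : quat :=
  Quat (q0 a * q0 b - q1 a * q1 b - q2 a * q2 b - q3 a * q3 b)
       (q0 a * q1 b + q1 a * q0 b + q2 a * q3 b - q3 a * q2 b)
       (q0 a * q2 b - q1 a * q3 b + q2 a * q0 b + q3 a * q1 b)
       (q0 a * q3 b + q1 a * q2 b - q2 a * q1 b + q3 a * q0 b).

Definition qpi : quat := Quat 1 1 1 0.

Definition rcong (a b : quat) : Prop := exists d : quat, qsub a b = qmul d qpi.

Definition l1 (q : quat) : nat :=
  (`|q0 q| + `|q1 q| + `|q2 q| + `|q3 q|)%N.

(* w is the Lipschitz weight of the class of q in H(Z)_pi:
   the minimum of l1 over the class *)
Definition is_lweight (q : quat) (w : nat) : Prop :=
  (exists q', rcong q' q /\ l1 q' = w) /\ (forall q', rcong q' q -> (w <= l1 q')%N).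

(* Vectors of length n over H(Z) (representatives of vectors over H(Z)_pi) *)
Definition qvec (n : nat) := 'I_n -> quat.
Definition vsub n (u v : qvec n) : qvec n := fun i => qsub (u i) (v i).
Definition vadd n (u v : qvec n) : qvec n := fun i => qadd (u i) (v i).
Definition vopp n (u : qvec n) : qvec n := fun i => qopp (u i).
Definition vzero (n : nat) : qvec n := fun _ => qzero.
Arguments vzero n _ : clear implicits.

Definition vcong n (u v : qvec n) : Prop := forall i, rcong (u i) (v i).

Definition vweight_le n (u : qvec n) (t : nat) : Prop :=
  exists w : 'I_n -> nat, (forall i, is_lweight (u i) (w i)) /\ (\sum_(i < n) w i <= t)%N.

(* A subset C of H(Z)_pi^n is represented by its preimage in H(Z)^n,
   i.e. a predicate on representatives that is a union of classes.
   (n,k) linear code: additive subgroup with exactly (N(pi)^2)^(n-k) = 9^(n-k)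
   cosets, expressed as the existence of a complete, irredundant system of
   coset representatives of that size. *)
Definition linear_code (n k : nat) (C : qvec n -> Prop) : Prop :=
  [/\ (forall u v, vcong u v -> C u -> C v),
      C (vzero n),
      (forall u v, C u -> C v -> C (vadd u v)),
      (forall u, C u -> C (vopp u)) &
      exists reps : seq (qvec n),
        [/\ size reps = ((3 ^ 2) ^ (n - k))%N,
            (forall i j, (i < size reps)%N -> (j < size reps)%N -> i <> j ->
               ~ C (vsub (nth (vzero n) reps i) (nth (vzero n) reps j))) &
            (forall u, exists2 i, (i < size reps)%N & C (vsub u (nth (vzero n) reps i)))]].

Definition corrects n (C : qvec n -> Prop) (t : nat) : Prop :=
  forall u v : qvec n, vweight_le u t -> vweight_le v t ->
    C (vsub u v) -> vcong u v.

From mathcomp Require Import all_boot all_order all_algebra.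
From mathcomp Require Import zify ring.
From Stdlib Require Import ClassicalEpsilon.
Import GRing.Theory Num.Theory.
Set Implicit Arguments. Unset Strict Implicit. Unset Printing Implicit Defensive.

(* 1. The integer forms [resid1], [resid2] are invariant mod 3 under right
      congruence modulo pi; they separate the nine classes 0, +-1, +-e1,
      +-e2, +-e3, so the eight units are pairwise incongruent, nonzero mod
      pi, and hence have Lipschitz weight exactly 1.
   2. An error pattern assigns to each coordinate either nothing or one of
      the eight units; its vector has weight at most the size of its
      support, and distinct patterns give incongruent vectors.
   3. Packing bound: if C corrects t errors, any family of pairwise
      incongruent vectors of weight <= t lies in pairwise distinct cosets,
      so its size is at most the number (3^2)^(n-k) of cosets.
   4. Patterns of support <= 2 are parametrised by a finite type of size
      1 + 8n + 64 'C(n,2) = 32n^2 - 24n + 1; packing gives the theorem. *)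

(* Two linear forms H(Z) -> Z whose residues mod 3 are class invariants. *)
Definition resid1 (q : quat) : int := (q0 q + q1 q + q2 q)%R.
Definition resid2 (q : quat) : int := (q0 q - q2 q + q3 q)%R.

Lemma rcong_resid a b : rcong a b ->
  exists k1 k2 : int, (resid1 a - resid1 b = 3 * k1 /\ resid2 a - resid2 b = 3 * k2)%R.
Proof.
case=> [[d0 d1 d2 d3]]; case: a => a0 a1 a2 a3; case: b => b0 b1 b2 b3.
rewrite /qsub /qadd /qopp /qmul /qpi /resid1 /resid2 /=; case=> e0 e1 e2 e3.
by exists d0, (- d2)%R; split; lia.
Qed.

Lemma rcong_refl x : rcong x x.
Proof.
exists qzero; case: x => ????; rewrite /qsub /qadd /qopp /qmul /=.
by congr Quat; ring.
Qed.

Definition unit_quat (a : 'I_8) : quat :=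
  nth qzero [:: Quat 1 0 0 0; Quat (-1) 0 0 0; Quat 0 1 0 0; Quat 0 (-1) 0 0;
              Quat 0 0 1 0; Quat 0 0 (-1) 0; Quat 0 0 0 1; Quat 0 0 0 (-1)] a.

Definition err_quat (o : option 'I_8) : quat :=
  if o is Some a then unit_quat a else qzero.

Lemma err_quat_inj o1 o2 : rcong (err_quat o1) (err_quat o2) -> o1 = o2.
Proof.
move/rcong_resid=> [k1 [k2 []]].
case: o1 => [[[|[|[|[|[|[|[|[|//]]]]]]]] ?]|];
case: o2 => [[[|[|[|[|[|[|[|[|//]]]]]]]] ?]|];
rewrite /err_quat /unit_quat /resid1 /resid2 /= => H1 H2;
first [ lia | reflexivity | (congr Some; apply: val_inj; reflexivity)].
Qed.

(* Units have Lipschitz weight 1: a class of l1-size 0 is the zero class. *)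
Lemma err_quat_weight o : is_lweight (err_quat o) (if o is Some _ then 1 else 0).
Proof.
split.
  exists (err_quat o); split; first exact: rcong_refl.
  by case: o => [[[|[|[|[|[|[|[|[|//]]]]]]]] ?]|].
case: o => [a|] // [x0 x1 x2 x3] Hx; rewrite lt0n; apply/eqP => Hl1.
have Hzero : Quat x0 x1 x2 x3 = err_quat None.
  by move: Hl1; rewrite /l1 /= /qzero => Hl1; congr Quat; lia.
by move: Hx; rewrite Hzero => /err_quat_inj.
Qed.

Definition pattern (n : nat) := {ffun 'I_n -> option 'I_8}.
Definition pvec n (s : pattern n) : qvec n := fun i => err_quat (s i).
Definition psupport n (s : pattern n) : pred 'I_n := fun i => s i != None.

Lemma pvec_weight n (s : pattern n) : vweight_le (pvec s) #|psupport s|.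
Proof.
exists (fun i => if s i is Some _ then 1 else 0); split.
  by move=> i; exact: err_quat_weight.
rewrite -sum1_card [X in _ <= X]big_mkcond /=; apply: leq_sum => i _.
by rewrite unfold_in /psupport; case: (s i).
Qed.

Lemma pvec_inj n (s t : pattern n) : vcong (pvec s) (pvec t) -> s = t.
Proof. by move=> H; apply/ffunP => i; apply: err_quat_inj; exact: H. Qed.

Lemma vsub_cancel n (u v r : qvec n) :
  vcong (vadd (vsub u r) (vopp (vsub v r))) (vsub u v).
Proof.
move=> i; exists qzero; case: (u i) (v i) (r i) => ???? [????] [????].
by rewrite /qsub /qadd /qopp /qmul /=; congr Quat; ring.
Qed.

Lemma packing_bound n k (C : qvec n -> Prop) t (T : finType) (f : T -> qvec n) :
  linear_code k C -> corrects C t ->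
  (forall x, vweight_le (f x) t) ->
  (forall x y, vcong (f x) (f y) -> x = y) ->
  #|T| <= (3 ^ 2) ^ (n - k).
Proof.
move=> [Hcl _ Hadd Hopp [reps [Hsz _ Hcov]]] Hcorr Hw Hf.
pose coset (u : qvec n) (i : 'I_(size reps)) := C (vsub u (nth (vzero n) reps i)).
have pick x : {i | coset (f x) i}.
  apply: constructive_indefinite_description.
  by have [i Hi HC] := Hcov (f x); exists (Ordinal Hi).
have coset_inj : injective (fun x => sval (pick x)).
  move=> x y Exy; apply: Hf; apply: Hcorr; rewrite ?Hw //.
  have Hx := svalP (pick x); rewrite Exy in Hx.
  apply: Hcl (vsub_cancel _ _ _) _.
  by apply: Hadd Hx (Hopp _ (svalP (pick y))).
by rewrite -Hsz -[size reps]card_ord; exact: leq_card coset_inj.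
Qed.

(* Index set for the patterns of support at most 2: the zero pattern, a
   single error (position, unit), or two errors at positions i < j. *)
Definition small_err (n : nat) : finType :=
  ((unit + ('I_n * 'I_8)) + ({j : 'I_n & 'I_j} * 'I_8 * 'I_8))%type.

Definition below n (j : 'I_n) (i : 'I_j) : 'I_n := widen_ord (ltnW (ltn_ord j)) i.

Definition err_positions n (d : small_err n) : seq 'I_n :=
  match d with
  | inl (inl _) => [::]
  | inl (inr (i, _)) => [:: i]
  | inr (existT j i, _, _) => [:: below i; j]
  end.

Definition err_values n (d : small_err n) : seq 'I_8 :=
  match d with
  | inl (inl _) => [::]
  | inl (inr (_, a)) => [:: a]
  | inr (_, a, b) => [:: a; b]
  end.

Definition err_pattern n (d : small_err n) : pattern n :=
  match d with
  | inl (inl _) => [ffun _ => None]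
  | inl (inr (i, a)) => [ffun x => if x == i then Some a else None]
  | inr (existT j i, a, b) =>
      [ffun x => if x == below i then Some a else if x == j then Some b else None]
  end.

Lemma below_neq n (j : 'I_n) (i : 'I_j) : (j == below i) = false.
Proof. by apply/negbTE; rewrite neq_ltn /= ltn_ord orbT. Qed.

Lemma err_positions_sorted n (d : small_err n) :
  sorted (fun x y : 'I_n => x < y) (err_positions d).
Proof. by case: d => [[[]|[]]|[[[j i] _] _]] //=; rewrite andbT. Qed.

Lemma err_pattern_support n (d : small_err n) :
  psupport (err_pattern d) =i err_positions d.
Proof.
move=> x; rewrite unfold_in /psupport.
case: d => [[[]|[i a]]|[[[j i] a] b]]; rewrite /= ffunE ?inE //.
  by case: (x == i).
by case: (x == below i) => //=; case: (x == j).
Qed.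

Lemma err_pattern_values n (d : small_err n) :
  map (err_pattern d) (err_positions d) = map Some (err_values d).
Proof.
case: d => [[[]|[i a]]|[[[j i] a] b]] //=; rewrite !ffunE ?eqxx //.
by rewrite below_neq.
Qed.

Lemma small_err_eq n (d1 d2 : small_err n) :
  err_positions d1 = err_positions d2 -> err_values d1 = err_values d2 -> d1 = d2.
Proof.
case: d1 => [[[]|[i a]]|[[[j i] a] b]]; case: d2 => [[[]|[i' a']]|[[[j' i'] a'] b']] //=.
- by case=> -> [->].
- case=> Ei Ej [-> ->]; subst j'.
  by rewrite (val_inj Ei).
Qed.

(* Distinct indices give distinct patterns: supports are recovered as sorted
   lists, then the values at the support. *)
Lemma err_pattern_inj n : injective (@err_pattern n).
Proof.
move=> d1 d2 E.
have Epos : err_positions d1 = err_positions d2.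
  apply: (irr_sorted_eq (leT := fun x y : 'I_n => x < y)).
  - by move=> ???; exact: ltn_trans.
  - by move=> ?; exact: ltnn.
  - exact: err_positions_sorted.
  - exact: err_positions_sorted.
  by move=> x; rewrite -!err_pattern_support E.
apply: small_err_eq => //; apply: (inj_map (@Some_inj _)).
by rewrite -!err_pattern_values E Epos.
Qed.

Lemma err_pattern_weight n (d : small_err n) : vweight_le (pvec (err_pattern d)) 2.
Proof.
have Hsize : size (err_positions d) <= 2 by case: d => [[[]|[]]|[[[]]]].
have [w [Hw Hsum]] := pvec_weight (err_pattern d).
exists w; split => //; apply: (leq_trans Hsum).
by rewrite (eq_card (err_pattern_support d)); apply: leq_trans (card_size _) _.
Qed.

(* Counting: 1 + 8n + 64 'C(n,2) = 32n^2 - 24n + 1. *)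
Lemma card_small_err n : #|small_err n| = 32 * n ^ 2 - 24 * n + 1.
Proof.
have Hpairs : 2 * \sum_(j < n) j = n * n.-1.
  by rewrite -(big_mkord xpredT (fun i => i)) bin2_sum -(mul_bin_diag n 1) bin1.
rewrite !card_sum !card_prod card_unit !card_ord card_tagged sumnE big_map big_enum /=.
rewrite (eq_bigr (fun j : 'I_n => (j : nat))) => [|j _]; last by rewrite card_ord.
move: Hpairs; rewrite (eq_bigl xpredT) //; case: n => [|m] /=; nia.
Qed.

Theorem theorem7 (n k : nat) (C : qvec n -> Prop) :
  @linear_code n k C -> corrects C 2 ->
  (32 * n ^ 2 - 24 * n + 1 <= (3 ^ 2) ^ (n - k))%N.
Proof.
move=> HC Hcorr; rewrite -card_small_err.
apply: (packing_bound HC Hcorr (f := fun d => pvec (err_pattern d))).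
- exact: err_pattern_weight.
- by move=> d1 d2 /pvec_inj /err_pattern_inj.
Qed.
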